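(* Let $Y,Z$ be finite-dimensional real or complex vector spaces, $f$ a vector field on $Y$, $F\colon Y\to Z$ quadratic, and $g,\gamma$ vector fields on $Z$ with $F'(y)f(y)=g(F(y))$ and $F''(f(y),f(y))=\gamma(F(y))$ for all $y\in Y$. Let nonzero $b_1,\dots,b_s$ and $h>0$ be given, and let $z_0,z_1,Z_1,\dots,Z_s\in Z$ satisfy \[ Z_i = z_0 + h\sum_{j=1}^{i-1} b_j g(Z_j) + \frac h2 b_i g(Z_i) - \frac{h^2}{8} b_i^2\gamma(Z_i)\ (i=1,\dots,s),\qquad z_1 = z_0 + h\sum_{i=1}^s b_i g(Z_i). \] If $G$ is a quadratic map on $Z$ (into some finite-dimensional vector space), then \[ G(z_1) = G(z_0) + h\sum_{i=1}^s b_i G'(Z_i)g(Z_i) + \frac{h^3}{8}\sum_{i=1}^s b_i^3 G''\bigl(g(Z_i),\gamma(Z_i)\bigr). \]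
   Context: A map $F$ on a vector space is quadratic if for every base point $y_0$, $F(y)=F(y_0)+F'(y_0)(y-y_0)+\tfrac12F''(y-y_0,y-y_0)$ for all $y$, with $F''$ a constant symmetric bilinear map. *)

From HB Require Import structures.
From mathcomp Require Import all_boot all_order all_algebra.
Set Implicit Arguments. Unset Strict Implicit. Unset Printing Implicit Defensive.
Import Order.TTheory GRing.Theory Num.Theory.
Local Open Scope ring_scope.

(* F : Y -> Z is quadratic with first derivative DF (DF y0 is the linear map
   F'(y0)) and constant symmetric bilinear second derivative D2F (= F''):
   F y = F y0 + F'(y0)(y - y0) + 1/2 F''(y - y0, y - y0) for all y0, y. *)
Definition is_quadratic (K : numFieldType) (Y Z : lmodType K)
    (F : Y -> Z) (DF : Y -> Y -> Z) (D2F : Y -> Y -> Z) : Prop :=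
  [/\ (forall y0 (a : K) u v, DF y0 (a *: u + v) = a *: DF y0 u + DF y0 v),
      (forall (a : K) u v w, D2F (a *: u + v) w = a *: D2F u w + D2F v w),
      (forall u v, D2F u v = D2F v u) &
      (forall y0 y, F y = F y0 + DF y0 (y - y0) + 2^-1 *: D2F (y - y0) (y - y0))].

From HB Require Import structures.
From mathcomp Require Import all_boot all_order all_algebra.
From mathcomp Require Import ring.
Import Order.TTheory GRing.Theory Num.Theory.
Local Open Scope ring_scope.

(* Write y_i = z0 + h sum_(j < i) b_j g(Z_j) for the partial sums, so that
   y_(i+1) = y_i + e u with e = h b_i, u = g(Z_i), and the stage equation reads
   Z_i = y_i + (e/2) u - (e^2/8) w with w = gamma(Z_i).  Since G is quadratic,
   G(y_i + e u) = G(y_i) + e G'(y_i) u + (e^2/2) G''(u, u) exactly, and moving the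
   derivative from y_i to Z_i costs e G''(Z_i - y_i, u), which cancels the
   (e^2/2) G''(u, u) term and leaves (e^3/8) G''(u, w).  Summing over the stages
   telescopes. *)

Section QuadraticMap.
Context {K : numFieldType} {Z W : lmodType K} {G : Z -> W} {DG D2G : Z -> Z -> W}.
Hypothesis HG : is_quadratic G DG D2G.

Lemma derivD y u v : DG y (u + v) = DG y u + DG y v.
Proof. by case: HG => linDG _ _ _; rewrite -[u]scale1r linDG !scale1r. Qed.

Lemma derivZ y a u : DG y (a *: u) = a *: DG y u.
Proof.
have DG0 : DG y 0 = 0 by apply: (addrI (DG y 0)); rewrite -derivD !addr0.
by case: HG => linDG _ _ _; rewrite -[a *: u]addr0 linDG DG0 addr0.
Qed.

Lemma hessC u v : D2G u v = D2G v u.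
Proof. by case: HG. Qed.

Lemma hessDl u v w : D2G (u + v) w = D2G u w + D2G v w.
Proof. by case: HG => _ linD2G _ _; rewrite -[u]scale1r linD2G !scale1r. Qed.

Lemma hessZl a u w : D2G (a *: u) w = a *: D2G u w.
Proof.
have D2G0 : D2G 0 w = 0 by apply: (addrI (D2G 0 w)); rewrite -hessDl !addr0.
by case: HG => _ linD2G _ _; rewrite -[a *: u]addr0 linD2G D2G0 addr0.
Qed.

Lemma hessBl u v w : D2G (u - v) w = D2G u w - D2G v w.
Proof. by rewrite -scaleN1r hessDl hessZl scaleN1r. Qed.

Lemma hessDr u v w : D2G w (u + v) = D2G w u + D2G w v.
Proof. by rewrite hessC hessDl !(hessC _ w). Qed.

Lemma hessZr a u w : D2G w (a *: u) = a *: D2G w u.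
Proof. by rewrite hessC hessZl hessC. Qed.

Lemma quadratic_expand y d : G (y + d) = G y + DG y d + 2^-1 *: D2G d d.
Proof. by case: HG => _ _ _ expand; rewrite (expand y) (addrC y) addrK. Qed.

Lemma half_hessDD u v :
  2^-1 *: D2G (u + v) (u + v) = 2^-1 *: D2G u u + D2G u v + 2^-1 *: D2G v v.
Proof.
rewrite hessDl !hessDr (hessC v u) !scalerDr !addrA -(addrA (2^-1 *: D2G u u)).
rewrite -scalerDl; have -> : (2^-1 + 2^-1 : K) = 1 by field.
by rewrite scale1r.
Qed.

Lemma deriv_shift y0 y1 v : DG y1 v = DG y0 v + D2G (y1 - y0) v.
Proof.
(* Compare the expansions of G (y1 + v) around y0 and around y1. *)
have := quadratic_expand y0 (y1 - y0 + v).
rewrite addrA subrKC quadratic_expand -{1}(subrKC y0 y1) quadratic_expand.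
rewrite derivD half_hessDD [RHS](AC ((1*2)*3) ((1*2*4)*(3*5)*6))%AC.
by move/addIr/addrI.
Qed.

Lemma quadratic_stage_increment (e : K) (y z u w : Z) :
    z = y + (e / 2) *: u - (e ^+ 2 / 8) *: w ->
  G (y + e *: u) = G y + e *: DG z u + (e ^+ 3 / 8) *: D2G u w.
Proof.
move=> z_def.
have offset : z - y = (e / 2) *: u - (e ^+ 2 / 8) *: w.
  by rewrite z_def addrAC (addrC y) addrK.
rewrite quadratic_expand derivZ.
have -> : DG y u = DG z u - D2G (z - y) u by rewrite (deriv_shift y z) addrK.
rewrite offset hessBl !hessZl hessZr (hessC w u) !scalerA scalerBr scalerBr opprB !scalerA.
have -> : e * (e ^+ 2 / 8) = e ^+ 3 / 8 by ring.
have -> : 2^-1 * (e * e) = e * (e / 2) by field.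
by rewrite !addrA subrK.
Qed.

End QuadraticMap.

Lemma sum_ord_ltS {V : nmodType} {s k : nat} (lt_ks : (k < s)%N) (F : 'I_s -> V) :
  \sum_(j < s | (j < k.+1)%N) F j = \sum_(j < s | (j < k)%N) F j + F (Ordinal lt_ks).
Proof.
rewrite (bigD1 (Ordinal lt_ks)) //= addrC; congr (_ + _); apply: eq_bigl => j.
by rewrite -val_eqE /= ltnS; case: ltngtP.
Qed.

Lemma telescope_partial_sums {V W : nmodType} {G : V -> W} {s : nat}
    {d : 'I_s -> V} {e : 'I_s -> W} (z0 : V) :
    (forall i : 'I_s, let y := z0 + \sum_(j < s | (j < i)%N) d j in
       G (y + d i) = G y + e i) ->
  G (z0 + \sum_(j < s) d j) = G z0 + \sum_(j < s) e j.
Proof.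
move=> step.
have partial k : (k <= s)%N ->
    G (z0 + \sum_(j < s | (j < k)%N) d j) = G z0 + \sum_(j < s | (j < k)%N) e j.
  elim: k => [|k IH] le_ks; first by rewrite !big_pred0 // !addr0.
  by rewrite !(sum_ord_ltS le_ks) !addrA (step (Ordinal le_ks)) IH // ltnW.
have all_lt (U : nmodType) (F : 'I_s -> U) :
    \sum_(j < s | (j < s)%N) F j = \sum_(j < s) F j.
  by apply: eq_bigl => j; exact: ltn_ord.
by rewrite -!all_lt partial.
Qed.

Theorem theorem2p10 (K : numFieldType) (Y Z W : vectType K)
    (f : Y -> Y) (F : Y -> Z) (DF D2F : Y -> Y -> Z)
    (g gamma : Z -> Z)
    (HF : is_quadratic F DF D2F)
    (Hg : forall y, DF y (f y) = g (F y))
    (Hgamma : forall y, D2F (f y) (f y) = gamma (F y))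
    (s : nat) (b : 'I_s -> K) (Hb : forall i, b i != 0)
    (h : K) (Hh : 0 < h)
    (z0 z1 : Z) (Zs : 'I_s -> Z)
    (HZ : forall i : 'I_s,
        Zs i = z0 + h *: (\sum_(j < s | (j < i)%N) b j *: g (Zs j))
               + (h / 2 * b i) *: g (Zs i)
               - (h ^+ 2 / 8 * b i ^+ 2) *: gamma (Zs i))
    (Hz1 : z1 = z0 + h *: (\sum_(i < s) b i *: g (Zs i)))
    (G : Z -> W) (DG D2G : Z -> Z -> W)
    (HG : is_quadratic G DG D2G) :
  G z1 = G z0 + h *: (\sum_(i < s) b i *: DG (Zs i) (g (Zs i)))
         + (h ^+ 3 / 8) *: (\sum_(i < s) b i ^+ 3 *: D2G (g (Zs i)) (gamma (Zs i))).
Proof.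
(* The identity holds for arbitrary g, gamma, b and h: the data F, f, HF, Hg,
   Hgamma, Hb and Hh only say where g and gamma come from. *)
pose d i := (h * b i) *: g (Zs i).
have scaled_sum (P : pred 'I_s) :
    h *: \sum_(j < s | P j) b j *: g (Zs j) = \sum_(j < s | P j) d j.
  by rewrite scaler_sumr; apply: eq_bigr => j _; rewrite scalerA.
have stage (i : 'I_s) : let y := z0 + \sum_(j < s | (j < i)%N) d j in
    G (y + d i) = G y + (h *: (b i *: DG (Zs i) (g (Zs i)))
                         + (h ^+ 3 / 8) *: (b i ^+ 3 *: D2G (g (Zs i)) (gamma (Zs i)))).
  move=> y; rewrite (quadratic_stage_increment HG _ _ (Zs i) _ (gamma (Zs i))).
    by rewrite -addrA !scalerA; congr (_ + (_ + _ *: _)); ring.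
  by rewrite {1}HZ scaled_sum; congr (_ + _ *: _ - _ *: _); ring.
rewrite Hz1 (scaled_sum xpredT) (telescope_partial_sums z0 stage).
by rewrite big_split /= -!scaler_sumr addrA.
Qed.
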